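(* Let $(X,\rho)$ be a complete, separable metric space, let $\omega:[0,+\infty)\to[0,+\infty)$ be a continuous, concave, nonzero and nondecreasing function with $\omega(0)=0$, and let $\Theta=\{\theta_n\}_{n=1}^\infty$ be dense in $X$. Define $d_\Theta:\mathcal{C}_\omega(X)\times\mathcal{C}_\omega(X)\to\mathbb{R}$ by $d_\Theta(f,g)=\sum_{n=1}^\infty 2^{-n}\min\{1,\rho(f(\theta_n),g(\theta_n))\}$. Then $d_\Theta$ is a complete metric on $\mathcal{C}_\omega(X)$. Moreover, a sequence $(f_k)_{k=1}^\infty$ in $\mathcal{C}_\omega(X)$ converges to $f\in\mathcal{C}_\omega(X)$ with respect to $d_\Theta$ if and only if $f_k(x)\to f(x)$ for every $x\in X$ as $k\to\infty$.
   Context: For $f:X\to X$, the modulus of continuity is $\omega_f(s)=\sup\{\rho(f(x),f(y)): x,y\in X,\ \rho(x,y)\le s\}$ for $s\ge0$; $\mathcal{C}_\omega(X)$ is the set of all maps $f:X\to X$ with $\omega_f(s)\le\omega(s)$ for all $s\ge0$. *)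

From Stdlib Require Import Reals Lra.
From Coquelicot Require Import Coquelicot.
Open Scope R_scope.

Definition is_metric {X : Type} (rho : X -> X -> R) : Prop :=
  (forall x y, 0 <= rho x y) /\
  (forall x y, rho x y = 0 <-> x = y) /\
  (forall x y, rho x y = rho y x) /\
  (forall x y z, rho x z <= rho x y + rho y z).

Definition is_metric_on {T : Type} (S : T -> Prop) (m : T -> T -> R) : Prop :=
  (forall x y, S x -> S y -> 0 <= m x y) /\
  (forall x y, S x -> S y -> (m x y = 0 <-> x = y)) /\
  (forall x y, S x -> S y -> m x y = m y x) /\
  (forall x y z, S x -> S y -> S z -> m x z <= m x y + m y z).

Definition cauchy_seq {T : Type} (m : T -> T -> R) (u : nat -> T) : Prop :=
  forall eps, 0 < eps -> exists N, forall p q, (N <= p)%nat -> (N <= q)%nat ->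
    m (u p) (u q) < eps.

Definition converges_to {T : Type} (m : T -> T -> R) (u : nat -> T) (l : T) : Prop :=
  forall eps, 0 < eps -> exists N, forall p, (N <= p)%nat -> m (u p) l < eps.

Definition complete_on {T : Type} (S : T -> Prop) (m : T -> T -> R) : Prop :=
  forall u : nat -> T, (forall k, S (u k)) -> cauchy_seq m u ->
    exists l, S l /\ converges_to m u l.

Definition complete_space {X : Type} (rho : X -> X -> R) : Prop :=
  complete_on (fun _ : X => True) rho.

Definition dense_seq {X : Type} (rho : X -> X -> R) (theta : nat -> X) : Prop :=
  forall x eps, 0 < eps -> exists n, rho x (theta n) < eps.

Definition separable {X : Type} (rho : X -> X -> R) : Prop :=
  exists theta : nat -> X, dense_seq rho theta.

(* hypotheses on omega : [0,+oo) -> [0,+oo) (represented as R -> R) *)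
Definition admissible_modulus (omega : R -> R) : Prop :=
  (forall s, 0 <= s -> 0 <= omega s) /\
  (forall s, 0 <= s -> forall eps, 0 < eps -> exists delta, 0 < delta /\
     forall t, 0 <= t -> Rabs (t - s) < delta -> Rabs (omega t - omega s) < eps) /\
  (forall s t l, 0 <= s -> 0 <= t -> 0 <= l <= 1 ->
     l * omega s + (1 - l) * omega t <= omega (l * s + (1 - l) * t)) /\
  (exists s, 0 <= s /\ omega s <> 0) /\
  (forall s t, 0 <= s -> s <= t -> omega s <= omega t) /\
  omega 0 = 0.

Definition modulus_of_continuity {X : Type} (rho : X -> X -> R) (f : X -> X) (s : R)
  : Rbar :=
  Lub_Rbar (fun r => exists x y, rho x y <= s /\ r = rho (f x) (f y)).

Definition C_omega {X : Type} (rho : X -> X -> R) (omega : R -> R) (f : X -> X) : Prop :=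
  forall s, 0 <= s -> Rbar_le (modulus_of_continuity rho f s) (Finite (omega s)).

(* d_Theta(f,g) = sum_{n>=1} 2^{-n} min{1, rho(f theta_n, g theta_n)};
   theta is indexed from 0 here, theta n playing the role of theta_{n+1}. *)
Definition d_Theta {X : Type} (rho : X -> X -> R) (theta : nat -> X) (f g : X -> X) : R :=
  Series (fun n => (/ 2) ^ (S n) * Rmin 1 (rho (f (theta n)) (g (theta n)))).

From Stdlib Require Import Reals Lra Lia ClassicalEpsilon FunctionalExtensionality.
From Coquelicot Require Import Coquelicot.
Open Scope R_scope.

(* Maps in C_omega are equicontinuous: through any point theta n,
   rho (f x) (g x) <= 2 omega (rho x (theta n)) + rho (f (theta n)) (g (theta n)),
   and omega s -> 0 as s -> 0, so by density everything about f and g is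
   controlled by their values on theta.  Because the weights 2^-n are summable,
   d_Theta (f k) f -> 0 exactly when f k (theta n) -> f (theta n) for every n.
   Hence d_Theta-convergence is pointwise convergence, d_Theta separates points
   of C_omega, and a d_Theta-Cauchy sequence is pointwise Cauchy; its pointwise
   limit, which exists since X is complete, is again in C_omega and is the
   d_Theta-limit. *)

Lemma is_series_half_pow : is_series (fun n => (/2) ^ S n) 1.
Proof.
  replace 1 with (scal (/2) (/ (1 - /2))) by (cbn; field).
  apply (is_series_scal_l (/2) (fun n => (/2) ^ n)), is_series_geom.
  rewrite Rabs_pos_eq; lra.
Qed.

Lemma Series_nonneg (t : nat -> R) :
  ex_series t -> (forall n, 0 <= t n) -> 0 <= Series t.
Proof.
  intros Ht Hpos.
  replace 0 with (Series (fun n => 0 * t n)).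
  - apply Series_le; [intros n; rewrite Rmult_0_l; split; [lra | apply Hpos] | exact Ht].
  - rewrite Series_scal_l; ring.
Qed.

Lemma le_Series (t : nat -> R) (n : nat) :
  ex_series t -> (forall k, 0 <= t k) -> t n <= Series t.
Proof.
  intros Ht Hpos.
  rewrite (Series_incr_n t (S n)) by (lia || exact Ht); simpl pred.
  assert (Htail : 0 <= Series (fun k => t (S n + k)%nat)).
  { apply Series_nonneg; [apply ex_series_incr_n, Ht | intros; apply Hpos]. }
  destruct n as [|n]; cbn [sum_f_R0]; [lra|].
  assert (0 <= sum_f_R0 t n) by (apply cond_pos_sum, Hpos).
  lra.
Qed.

Definition half_dominated (t : nat -> R) : Prop :=
  forall n, 0 <= t n <= (/2) ^ S n.

Lemma pow_half_bounds (n : nat) : 0 < (/2) ^ n <= 1.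
Proof. induction n; simpl; lra. Qed.

Lemma ex_series_half_dominated (t : nat -> R) : half_dominated t -> ex_series t.
Proof.
  intros Ht. apply (ex_series_le t (fun n => (/2) ^ S n)).
  - intros n. change (Rabs (t n) <= (/2) ^ S n). rewrite Rabs_pos_eq; apply Ht.
  - exists 1. exact is_series_half_pow.
Qed.

Lemma Series_half_dominated_le (t : nat -> R) (N : nat) :
  half_dominated t -> Series t <= sum_f_R0 t N + (/2) ^ S N.
Proof.
  intros Ht.
  rewrite (Series_incr_n t (S N)) by (lia || apply ex_series_half_dominated, Ht).
  simpl pred. apply Rplus_le_compat_l.
  replace ((/2) ^ S N) with (Series (fun n => (/2) ^ S N * (/2) ^ S n)).
  - apply Series_le.
    + intros n. rewrite <- pow_add.
      replace (S N + S n)%nat with (S (S N + n)) by lia. apply Ht.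
    + exists ((/2) ^ S N * 1). apply (is_series_scal_l ((/2) ^ S N) _ _ is_series_half_pow).
  - rewrite Series_scal_l, (is_series_unique _ _ is_series_half_pow). ring.
Qed.

Lemma eventually_forall_le (P : nat -> nat -> Prop) :
  (forall n, exists K, forall k, (K <= k)%nat -> P n k) ->
  forall N, exists K, forall n k, (n <= N)%nat -> (K <= k)%nat -> P n k.
Proof.
  intros H N. induction N as [|N [K1 H1]].
  - destruct (H 0%nat) as [K HK]. exists K. intros n k Hn Hk.
    replace n with 0%nat by lia. auto.
  - destruct (H (S N)) as [K2 H2]. exists (max K1 K2). intros n k Hn Hk.
    destruct (Nat.eq_dec n (S N)) as [->|]; [apply H2 | apply H1]; lia.
Qed.

Lemma Rmin_1_bounds (r : R) : 0 <= r -> 0 <= Rmin 1 r <= 1.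
Proof. intros; unfold Rmin; destruct Rle_dec; lra. Qed.

Lemma Rmin_1_triangle (a b c : R) :
  0 <= b -> 0 <= c -> a <= b + c -> Rmin 1 a <= Rmin 1 b + Rmin 1 c.
Proof. intros; unfold Rmin; repeat destruct Rle_dec; lra. Qed.

Section DTheta.

Variables (X : Type) (rho : X -> X -> R) (theta : nat -> X).
Hypothesis Hrho : is_metric rho.

Definition d_Theta_term (f g : X -> X) (n : nat) : R :=
  (/2) ^ S n * Rmin 1 (rho (f (theta n)) (g (theta n))).

Lemma d_Theta_term_half_dominated (f g : X -> X) :
  half_dominated (d_Theta_term f g).
Proof.
  intros n. unfold d_Theta_term.
  destruct (Rmin_1_bounds _ (proj1 Hrho (f (theta n)) (g (theta n)))).
  destruct (pow_half_bounds (S n)). split; nra.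
Qed.

Lemma d_Theta_nonneg (f g : X -> X) : 0 <= d_Theta rho theta f g.
Proof.
  apply Series_nonneg.
  - apply ex_series_half_dominated, d_Theta_term_half_dominated.
  - intros n. apply (d_Theta_term_half_dominated f g n).
Qed.

Lemma d_Theta_self (f : X -> X) : d_Theta rho theta f f = 0.
Proof.
  destruct Hrho as (_ & Hzero & _).
  unfold d_Theta. rewrite <- (Rmult_0_l (Series (fun _ : nat => 0))), <- Series_scal_l.
  apply Series_ext. intros n. rewrite (proj2 (Hzero _ _) eq_refl).
  unfold Rmin; destruct Rle_dec; lra.
Qed.

Lemma d_Theta_sym (f g : X -> X) : d_Theta rho theta f g = d_Theta rho theta g f.
Proof.
  apply Series_ext. intros n. destruct Hrho as (_ & _ & Hsym & _).
  rewrite Hsym. reflexivity.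
Qed.

Lemma d_Theta_triangle (f g h : X -> X) :
  d_Theta rho theta f h <= d_Theta rho theta f g + d_Theta rho theta g h.
Proof.
  destruct Hrho as (Hnn & _ & _ & Htri).
  assert (Hex : forall f g, ex_series (d_Theta_term f g))
    by (intros; apply ex_series_half_dominated, d_Theta_term_half_dominated).
  change (Series (d_Theta_term f h)
          <= Series (d_Theta_term f g) + Series (d_Theta_term g h)).
  rewrite <- Series_plus by apply Hex.
  apply Series_le; [|apply (ex_series_plus _ _ (Hex f g) (Hex g h))].
  intros n. split; [apply d_Theta_term_half_dominated|].
  unfold d_Theta_term. rewrite <- Rmult_plus_distr_l.
  apply Rmult_le_compat_l; [left; apply pow_half_bounds|].
  apply Rmin_1_triangle; auto.
Qed.

(* The n-th term alone forces rho (f (theta n)) (g (theta n)) < eps once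
   d_Theta f g < 2^-(n+1) * min 1 eps. *)
Lemma dist_at_lt_of_d_Theta_lt (n : nat) (eps : R) : 0 < eps ->
  exists c, 0 < c /\ forall f g, d_Theta rho theta f g < c ->
    rho (f (theta n)) (g (theta n)) < eps.
Proof.
  intros Heps. destruct (pow_half_bounds (S n)).
  exists ((/2) ^ S n * Rmin 1 eps). split.
  { apply Rmult_lt_0_compat; [lra | unfold Rmin; destruct Rle_dec; lra]. }
  intros f g Hd.
  destruct (Rlt_or_le (rho (f (theta n)) (g (theta n))) eps) as [|Hge]; [assumption|].
  exfalso.
  assert (Hterm : d_Theta_term f g n <= d_Theta rho theta f g).
  { apply le_Series; [apply ex_series_half_dominated|];
      apply d_Theta_term_half_dominated. }
  assert (Hmin : Rmin 1 eps <= Rmin 1 (rho (f (theta n)) (g (theta n))))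
    by (apply Rle_min_compat_l, Hge).
  unfold d_Theta_term in Hterm. nra.
Qed.

(* Make the first N+1 terms smaller than eps/2 in total; the tail is at most
   2^-(N+1) < eps/2. *)
Lemma d_Theta_lt_of_dist_at_lt (eps : R) : 0 < eps ->
  exists N delta, 0 < delta /\ forall f g,
    (forall n, (n <= N)%nat -> rho (f (theta n)) (g (theta n)) < delta) ->
    d_Theta rho theta f g < eps.
Proof.
  intros Heps.
  destruct (pow_lt_1_zero (/2) ltac:(rewrite Rabs_pos_eq; lra) (eps / 2))
    as [N HN]; [lra|].
  assert (Htail : (/2) ^ S N < eps / 2).
  { specialize (HN (S N) ltac:(lia)).
    rewrite Rabs_pos_eq in HN by (left; apply pow_half_bounds). exact HN. }
  assert (HSN : 0 < INR (S N)) by (apply lt_0_INR; lia).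
  exists N, (eps / (2 * INR (S N))). split.
  { apply Rdiv_lt_0_compat; lra. }
  intros f g Hclose. change (Series (d_Theta_term f g) < eps).
  eapply Rle_lt_trans;
    [apply (Series_half_dominated_le _ N), d_Theta_term_half_dominated|].
  assert (Hhead : sum_f_R0 (d_Theta_term f g) N
                  <= sum_f_R0 (fun _ => eps / (2 * INR (S N))) N).
  { apply sum_Rle. intros n Hn. specialize (Hclose n Hn).
    unfold d_Theta_term. destruct (pow_half_bounds (S n)).
    destruct (Rmin_1_bounds _ (proj1 Hrho (f (theta n)) (g (theta n)))).
    pose proof (Rmin_r 1 (rho (f (theta n)) (g (theta n)))). nra. }
  rewrite sum_cte in Hhead.
  replace (eps / (2 * INR (S N)) * INR (S N)) with (eps / 2) in Hhead
    by (field; lra).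
  lra.
Qed.

Lemma converges_d_Theta_iff (fk : nat -> X -> X) (f : X -> X) :
  converges_to (d_Theta rho theta) fk f <->
  forall n, converges_to rho (fun k => fk k (theta n)) (f (theta n)).
Proof.
  split.
  - intros Hconv n eps Heps.
    destruct (dist_at_lt_of_d_Theta_lt n eps Heps) as [c [Hc Hsmall]].
    destruct (Hconv c Hc) as [N HN].
    exists N. intros p Hp. apply Hsmall, HN, Hp.
  - intros Hconv eps Heps.
    destruct (d_Theta_lt_of_dist_at_lt eps Heps) as [N [delta [Hdelta Hsmall]]].
    destruct (eventually_forall_le
                (fun n k => rho (fk k (theta n)) (f (theta n)) < delta)
                (fun n => Hconv n delta Hdelta) N) as [K HK].
    exists K. intros p Hp. apply Hsmall. intros n Hn. apply HK; assumption.
Qed.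

Lemma cauchy_d_Theta_at (u : nat -> X -> X) :
  cauchy_seq (d_Theta rho theta) u ->
  forall n, cauchy_seq rho (fun k => u k (theta n)).
Proof.
  intros Hcauchy n eps Heps.
  destruct (dist_at_lt_of_d_Theta_lt n eps Heps) as [c [Hc Hsmall]].
  destruct (Hcauchy c Hc) as [N HN].
  exists N. intros p q Hp Hq. apply Hsmall, HN; assumption.
Qed.

End DTheta.

Lemma admissible_modulus_small (omega : R -> R) :
  admissible_modulus omega -> forall eps, 0 < eps ->
  exists delta, 0 < delta /\ forall s, 0 <= s -> s < delta -> omega s < eps.
Proof.
  intros (_ & Hcont & _ & _ & _ & Hzero) eps Heps.
  destruct (Hcont 0 (Rle_refl 0) eps Heps) as [delta [Hdelta Hclose]].
  exists delta. split; [exact Hdelta|].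
  intros s Hs Hsdelta.
  specialize (Hclose s Hs). rewrite Hzero, !Rminus_0_r, Rabs_pos_eq in Hclose by lra.
  eapply Rle_lt_trans; [apply Rle_abs | apply Hclose, Hsdelta].
Qed.

Section Equicontinuity.

Variables (X : Type) (rho : X -> X -> R) (omega : R -> R) (theta : nat -> X).
Hypotheses (Hrho : is_metric rho) (Homega : admissible_modulus omega)
  (Hdense : dense_seq rho theta).

Lemma C_omega_dist_le (f : X -> X) :
  C_omega rho omega f -> forall x y, rho (f x) (f y) <= omega (rho x y).
Proof.
  intros Hf x y. change (Rbar_le (rho (f x) (f y)) (omega (rho x y))).
  apply (Rbar_le_trans _ (modulus_of_continuity rho f (rho x y)));
    [|apply Hf, (proj1 Hrho)].
  apply (proj1 (Lub_Rbar_correct _)). exists x, y. split; [lra | reflexivity].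
Qed.

Lemma C_omega_of_dist_le (f : X -> X) :
  (forall x y, rho (f x) (f y) <= omega (rho x y)) -> C_omega rho omega f.
Proof.
  intros Hf s Hs. destruct Homega as (_ & _ & _ & _ & Hmono & _).
  apply (proj2 (Lub_Rbar_correct _)). intros r [x [y [Hxy ->]]].
  apply (Rle_trans _ (omega (rho x y))); [apply Hf | apply Hmono; auto].
  apply (proj1 Hrho).
Qed.

Lemma dist_lt_at_dense_point (x : X) (eps : R) : 0 < eps ->
  exists n, forall f g, C_omega rho omega f -> C_omega rho omega g ->
    rho (f x) (g x) < eps + rho (f (theta n)) (g (theta n)).
Proof.
  intros Heps. destruct Hrho as (Hnn & _ & Hsym & Htri).
  destruct (admissible_modulus_small omega Homega (eps / 2)) as [delta [Hdelta Hsmall]];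
    [lra|].
  destruct (Hdense x delta Hdelta) as [n Hn].
  exists n. intros f g Hf Hg.
  pose proof (C_omega_dist_le f Hf x (theta n)).
  pose proof (C_omega_dist_le g Hg (theta n) x).
  rewrite (Hsym (theta n) x) in *.
  pose proof (Hsmall _ (Hnn x (theta n)) Hn).
  pose proof (Htri (f x) (f (theta n)) (g x)).
  pose proof (Htri (f (theta n)) (g (theta n)) (g x)).
  lra.
Qed.

Lemma eq_of_eq_at_dense (f g : X -> X) :
  C_omega rho omega f -> C_omega rho omega g ->
  (forall n, f (theta n) = g (theta n)) -> f = g.
Proof.
  intros Hf Hg Hfg. apply functional_extensionality. intros x.
  destruct Hrho as (Hnn & Hzero & _).
  apply Hzero, Rle_antisym; [|apply Hnn].
  apply Rle_plus_epsilon. intros eps Heps.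
  destruct (dist_lt_at_dense_point x eps Heps) as [n Hn].
  specialize (Hn f g Hf Hg). rewrite Hfg, (proj2 (Hzero _ _) eq_refl) in Hn.
  lra.
Qed.

Lemma converges_pointwise_of_dense (fk : nat -> X -> X) (f : X -> X) :
  (forall k, C_omega rho omega (fk k)) -> C_omega rho omega f ->
  (forall n, converges_to rho (fun k => fk k (theta n)) (f (theta n))) ->
  forall x, converges_to rho (fun k => fk k x) (f x).
Proof.
  intros Hfk Hf Hconv x eps Heps.
  destruct (dist_lt_at_dense_point x (eps / 2)) as [n Hn]; [lra|].
  destruct (Hconv n (eps / 2)) as [N HN]; [lra|].
  exists N. intros p Hp.
  specialize (HN p Hp). specialize (Hn (fk p) f (Hfk p) Hf). simpl in *. lra.
Qed.

Lemma cauchy_pointwise_of_dense (u : nat -> X -> X) :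
  (forall k, C_omega rho omega (u k)) ->
  (forall n, cauchy_seq rho (fun k => u k (theta n))) ->
  forall x, cauchy_seq rho (fun k => u k x).
Proof.
  intros Hu Hcauchy x eps Heps.
  destruct (dist_lt_at_dense_point x (eps / 2)) as [n Hn]; [lra|].
  destruct (Hcauchy n (eps / 2)) as [N HN]; [lra|].
  exists N. intros p q Hp Hq.
  specialize (HN p q Hp Hq). specialize (Hn (u p) (u q) (Hu p) (Hu q)). simpl in *. lra.
Qed.

Lemma C_omega_pointwise_limit (u : nat -> X -> X) (f : X -> X) :
  (forall k, C_omega rho omega (u k)) ->
  (forall x, converges_to rho (fun k => u k x) (f x)) ->
  C_omega rho omega f.
Proof.
  intros Hu Hconv. apply C_omega_of_dist_le. intros x y.
  destruct Hrho as (_ & _ & Hsym & Htri).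
  apply Rle_plus_epsilon. intros eps Heps.
  destruct (Hconv x (eps / 2)) as [Nx Hx]; [lra|].
  destruct (Hconv y (eps / 2)) as [Ny Hy]; [lra|].
  set (k := max Nx Ny).
  specialize (Hx k ltac:(lia)). specialize (Hy k ltac:(lia)). simpl in Hx, Hy.
  pose proof (C_omega_dist_le (u k) (Hu k) x y).
  pose proof (Htri (f x) (u k x) (f y)).
  pose proof (Htri (u k x) (u k y) (f y)).
  rewrite (Hsym (f x) (u k x)) in *.
  lra.
Qed.

End Equicontinuity.

Lemma d_Theta_metric_on_C_omega (X : Type) (rho : X -> X -> R) (omega : R -> R)
  (theta : nat -> X) :
  is_metric rho -> admissible_modulus omega -> dense_seq rho theta ->
  is_metric_on (C_omega rho omega) (d_Theta rho theta).
Proof.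
  intros Hrho Homega Hdense.
  split; [|split; [|split]].
  - intros f g _ _. apply d_Theta_nonneg, Hrho.
  - intros f g Hf Hg. split; [|intros <-; apply d_Theta_self, Hrho].
    intros H0. apply (eq_of_eq_at_dense X rho omega theta); auto.
    intros n. apply (proj2 Hrho), Rle_antisym; [|apply (proj1 Hrho)].
    apply Rle_plus_epsilon. intros eps Heps.
    destruct (dist_at_lt_of_d_Theta_lt X rho theta Hrho n eps Heps) as [c [Hc Hsmall]].
    left. rewrite Rplus_0_l. apply Hsmall. lra.
  - intros f g _ _. apply d_Theta_sym, Hrho.
  - intros f g h _ _ _. apply d_Theta_triangle, Hrho.
Qed.

Lemma d_Theta_complete_on_C_omega (X : Type) (rho : X -> X -> R)
  (omega : R -> R) (theta : nat -> X) :
  is_metric rho -> complete_space rho -> admissible_modulus omega ->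
  dense_seq rho theta -> complete_on (C_omega rho omega) (d_Theta rho theta).
Proof.
  intros Hrho Hcomplete Homega Hdense u Hu Hcauchy.
  assert (Hlim : forall x, exists l, converges_to rho (fun k => u k x) l).
  { intros x.
    destruct (Hcomplete (fun k => u k x) (fun _ => I)) as [l [_ Hl]];
      [|exists l; exact Hl].
    apply (cauchy_pointwise_of_dense X rho omega theta); auto.
    apply cauchy_d_Theta_at; assumption. }
  destruct (choice _ Hlim) as [f Hf].
  exists f. split.
  - apply (C_omega_pointwise_limit X rho omega Hrho Homega u); assumption.
  - apply converges_d_Theta_iff; [assumption|]. intros n. apply Hf.
Qed.

Lemma converges_d_Theta_iff_pointwise (X : Type) (rho : X -> X -> R)
  (omega : R -> R) (theta : nat -> X) (fk : nat -> X -> X) (f : X -> X) :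
  is_metric rho -> admissible_modulus omega -> dense_seq rho theta ->
  (forall k, C_omega rho omega (fk k)) -> C_omega rho omega f ->
  converges_to (d_Theta rho theta) fk f <->
  forall x, converges_to rho (fun k => fk k x) (f x).
Proof.
  intros Hrho Homega Hdense Hfk Hf.
  rewrite converges_d_Theta_iff by assumption.
  split; [apply (converges_pointwise_of_dense X rho omega theta); assumption|].
  intros Hconv n. apply Hconv.
Qed.

Theorem proposition5p1 (X : Type) (rho : X -> X -> R) (omega : R -> R)
  (theta : nat -> X)
  (Hmetric : is_metric rho) (Hcomplete : complete_space rho) (Hsep : separable rho)
  (Homega : admissible_modulus omega) (Hdense : dense_seq rho theta) :
  is_metric_on (C_omega rho omega) (d_Theta rho theta) /\
  complete_on (C_omega rho omega) (d_Theta rho theta) /\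
  (forall (fk : nat -> X -> X) (f : X -> X),
     (forall k, C_omega rho omega (fk k)) -> C_omega rho omega f ->
     (converges_to (d_Theta rho theta) fk f <->
      forall x, converges_to rho (fun k => fk k x) (f x))).
Proof.
  (* [Hsep] is implied by [Hdense] and not needed. *)
  split; [|split].
  - apply d_Theta_metric_on_C_omega; assumption.
  - apply d_Theta_complete_on_C_omega; assumption.
  - intros fk f. apply converges_d_Theta_iff_pointwise; assumption.
Qed.
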